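(* Under Algorithm 2(a) below (with field size $q>n$), in every slot $t$, the size $Q(t)$ of the sender's queue after the arrivals of slot $t$ have been appended (end of Step 3) satisfies $$Q(t)\le \sum_{j=1}^n\big(\dim V(t)-\dim V_j(t)\big),$$ where $V(t)=\mathbb{F}_q^{A(t)}$ is the sender's knowledge space, $A(t)$ is the total number of arrivals up to and including slot $t$, and $V_j(t)$ is receiver $j$'s knowledge space at that time. That is, the physical queue size is at most the sum over receivers of the backlog in degrees of freedom between the sender and that receiver.
   Context: Model: a sender broadcasts to $n$ receivers over a slotted packet erasure broadcast channel; packets are vectors over $\mathbb{F}_q$, indexed by arrival order; each slot some packets may arrive at the sender (just after the slot begins); the sender transmits at most one linear combination of its stored packets per slot; each receiver either receives it or suffers an erasure, and the sender learns via perfect feedback before the end of the slot which receivers received it. The knowledge space of a node is the space of global coefficient vectors (with respect to all original packets arrived so far) of linear combinations it can compute. Algorithm 2(a): The sender stores queue contents $\mathbf{y}_1,\dots,\mathbf{y}_Q$ (each a linear combination of original packets) and matrices $B,B_1,\dots,B_n$ with $Q$ columns whose rows are local coefficient vectors (with respect to the current queue contents); initially all are empty. In every slot: (Step 3) if $a$ packets arrive, append them at the end of the queue, set $B=I_{Q}$ for the new queue length $Q$, and append $a$ zero columns to each $B_j$. (Step 4) If the queue is nonempty, choose $\mathbf{g}\in\mathrm{span}(B)$ with $\mathbf{g}\notin\mathrm{span}(B_j)$ for every $j$ with $\mathrm{span}(B_j)\ne\mathrm{span}(B)$ (span means row space), and transmit $\sum_i g_i\mathbf{y}_i$; otherwise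 set $\mathbf{g}=\mathbf{0}$ and transmit nothing. (Step 5) For each $j$, if $\mathbf{g}\neq\mathbf{0}$ and receiver $j$ received the transmission, append $\mathbf{g}$ as a row of $B_j$. (Step 6) Let $B_\Delta$ be a basis of $\bigcap_j\mathrm{span}(B_j)$; let $B'$ be a completion of $B_\Delta$ to a basis of $\mathrm{span}(B)$ and $B''=B'\setminus B_\Delta$; for each $j$ let $B_j'$ be a completion of $B_\Delta$ to a basis of $\mathrm{span}(B_j)$ such that $B_j'':=B_j'\setminus B_\Delta\subseteq\mathrm{span}(B'')$. (Step 7) Replace the queue contents by the packets $\sum_i h_i\mathbf{y}_i$ for $\mathbf{h}\in B''$. (Step 8) Replace each $B_j$ by the matrix $X_j$ with $B_j''=X_jB''$, and set $B=I_{|B''|}$. *)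

(* Model of Algorithm 2(a) (relational: all nondeterministic
   choices of the algorithm are existentially chosen at each slot). *)
From HB Require Import structures.
From mathcomp Require Import all_boot all_order all_algebra.
Set Implicit Arguments. Unset Strict Implicit. Unset Printing Implicit Defensive.
Import GRing.Theory.
Local Open Scope ring_scope.

Section Alg.
Variables (F : finFieldType) (n N : nat).
(* N = dimension of the ambient space of global coefficient vectors
   (original packets 0 .. N-1, indexed by arrival order). *)

(* The matrix B of the
   algorithm is always I_Q outside Step 6 (set so in Steps 3 and 8, and
   initially empty = I_0), so span(B) is the full space F^Q. *)
Record state := St {
  qsz : nat;
  Ymx : 'M[F]_(qsz, N);                       (* row i = global coeff. vector of y_i *)
  kB  : 'I_n -> nat;
  Bmx : forall j : 'I_n, 'M[F]_(kB j, qsz);  (* B_j (rows = local coeff. vectors) *)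
  Vmx : 'I_n -> 'M[F]_N                      (* knowledge space V_j (row space) *)
}.

Definition init_state : state :=
  @St 0 0 (fun _ => 0%N) (fun _ => 0) (fun _ => 0).

(* the b x m matrix all of whose b rows are v (b = 0 or 1 in use) *)
Definition rows_of (b : nat) m (v : 'rV[F]_m) : 'M[F]_(b, m) :=
  \matrix_(i < b, k < m) v 0 k.

(* global coefficient vectors of the [a] packets arriving when [A0] packets
   arrived before: unit vectors e_{A0}, ..., e_{A0+a-1} *)
Definition new_packets (A0 a : nat) : 'M[F]_(a, N) :=
  \matrix_(i < a, k < N) ((k : nat) == A0 + i)%:R.

(* Step 3: append a arrivals (A0 = number of earlier arrivals). *)
Definition arrive (A0 a : nat) (s : state) : state :=
  @St (qsz s + a) (col_mx (Ymx s) (new_packets A0 a)) (@kB s)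
      (fun j => row_mx (Bmx s j) 0) (@Vmx s).

(* Steps 4-8, given the post-arrival state s, the reception pattern r
   (r j = receiver j receives the transmission), leading to state s'. *)
Definition steps48 (s : state) (r : 'I_n -> bool) (s' : state) : Prop :=
  exists g : 'rV[F]_(qsz s),
    (* Step 4 (g in span(B) = F^Q is automatic) *)
    (forall j, ~~ (Bmx s j == 1%:M)%MS -> ~~ (g <= Bmx s j)%MS) /\
    let b j := (g != 0) && r j in
    let C j := col_mx (Bmx s j) (rows_of (b j) g) in
    let W j := (Vmx s j + rows_of (b j) (g *m Ymx s))%MS in
    exists (d : nat) (BD : 'M[F]_(d, qsz s)) (k : nat) (B2 : 'M[F]_(k, qsz s))
           (m : 'I_n -> nat) (Bj2 : forall j, 'M[F]_(m j, qsz s))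
           (X : forall j, 'M[F]_(m j, k)),
      row_free BD /\ (BD == \bigcap_(j < n) <<C j>>)%MS /\
      row_free (col_mx BD B2) /\ row_full (col_mx BD B2) /\
      (forall j, row_free (col_mx BD (Bj2 j)) /\ (col_mx BD (Bj2 j) == C j)%MS /\
                 (Bj2 j <= B2)%MS /\
                 Bj2 j = X j *m B2) /\
      s' = @St k (B2 *m Ymx s) m X W.

End Alg.

From HB Require Import structures.
From mathcomp Require Import all_boot all_order all_algebra zify.
Import GRing.Theory.

(* The proof is an invariant of the algorithm.  Let P be the number of packets
   arrived so far.  Then (i) the queue Y and every knowledge space V_j only
   involve the first P packets; (ii) a local combination x of the queue is
   known to receiver j (x Y in V_j) exactly when x lies in span(B_j); and
   (iii) the spans of the B_j have trivial intersection, since Step 6 strips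
   the common part from the queue.  Arrivals preserve (ii) because nobody
   knows anything about the new packets, which by (i) are independent of
   everything known.  By (ii) and (iii) the queue rows are independent, each
   receiver's codimension in the queue is at most its codimension in F^P, and
   a trivial intersection of the span(B_j) forces Q <= sum_j codim B_j.
   Neither q > n nor the choice of g in Step 4 enters the bound: they only
   guarantee that Step 4 can be carried out. *)

Set Implicit Arguments. Unset Strict Implicit. Unset Printing Implicit Defensive.
Local Open Scope ring_scope.

Section LinearAlgebra.
Variable F : fieldType.

Definition vanish_from N (P : nat) m (M : 'M[F]_(m, N)) :=
  forall v : 'rV[F]_N, (v <= M)%MS -> forall k : 'I_N, (P <= k)%N -> v 0 k = 0.

Lemma vanish_fromS N P m1 m2 (A : 'M[F]_(m1, N)) (B : 'M[F]_(m2, N)) :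
  (A <= B)%MS -> vanish_from P B -> vanish_from P A.
Proof. by move=> sAB zB v sv; apply: zB; apply: submx_trans sAB. Qed.

Lemma vanish_from_adds N P m1 m2 (A : 'M[F]_(m1, N)) (B : 'M[F]_(m2, N)) :
  vanish_from P A -> vanish_from P B -> vanish_from P (A + B)%MS.
Proof.
move=> zA zB v /sub_addsmxP [u ->] k Pk.
by rewrite mxE (zA _ (submxMl _ _) _ Pk) (zB _ (submxMl _ _) _ Pk) addr0.
Qed.

Lemma vanish_from_widen N P P' m (A : 'M[F]_(m, N)) :
  (P <= P')%N -> vanish_from P A -> vanish_from P' A.
Proof. by move=> le zA v sv k Pk; apply: zA sv k (leq_trans le Pk). Qed.

Lemma vanish_from0 N P m : vanish_from P (0 : 'M[F]_(m, N)).
Proof. by move=> v /submx0null -> k _; rewrite mxE. Qed.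

Lemma sub_row_mx0 m p q (B : 'M[F]_(m, p)) (x : 'rV_(p + q)) :
  (x <= row_mx B (0 : 'M_(m, q)))%MS = (lsubmx x <= B)%MS && (rsubmx x == 0).
Proof.
apply/idP/andP => [/submxP [D] | [/submxP [D eD] /eqP x20]].
  rewrite mul_mx_row mulmx0 -{1}(hsubmxK x) => /eq_row_mx [-> ->].
  by rewrite submxMl.
by rewrite -(hsubmxK x) eD x20 -[0](mulmx0 _ D) -mul_mx_row submxMl.
Qed.

Lemma row_free_col_mx_coefr m1 m2 p (A : 'M[F]_(m1, p)) (B : 'M[F]_(m2, p)) y x :
  row_free (col_mx A B) -> y *m A + x *m B = 0 -> x = 0 :> 'rV_m2.
Proof.
move=> freeAB e.
have /row_free_inj/(congr1 rsubmx) : row_mx y x *m col_mx A B = 0 *m col_mx A B.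
  by rewrite mul_row_col e mul0mx.
by rewrite row_mxKr => /(_ freeAB) ->; apply/matrixP => i j; rewrite !mxE.
Qed.

Lemma known_coeffs_adds Q N m1 m2 (Y : 'M[F]_(Q, N)) (V : 'M[F]_(m1, N))
    (B : 'M[F]_(m2, Q)) r (R : 'M[F]_(r, Q)) :
  (forall x : 'rV_Q, (x *m Y <= V)%MS -> (x <= B)%MS) ->
  forall x : 'rV_Q, (x *m Y <= V + R *m Y)%MS -> (x <= col_mx B R)%MS.
Proof.
move=> known x /sub_addsmxP [[v u] /= e].
have xuB : (x - u *m R <= B)%MS by apply: known; rewrite mulmxBl -mulmxA e addrK submxMl.
by rewrite -addsmxE -(subrK (u *m R) x) addmx_sub_adds ?submxMl.
Qed.

Lemma known_coeffs_row_free Q N (Y : 'M[F]_(Q, N)) (I : finType)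
    (kb : I -> nat) (B : forall j, 'M[F]_(kb j, Q)) (mv : I -> nat)
    (V : forall j, 'M[F]_(mv j, N)) :
  (forall j (x : 'rV_Q), (x *m Y <= V j)%MS -> (x <= B j)%MS) ->
  (forall x : 'rV_Q, (forall j, (x <= B j)%MS) -> x = 0) ->
  row_free Y.
Proof.
move=> known capB0; rewrite -kermx_eq0; apply/eqP/row_matrixP => i.
rewrite row0; apply: capB0 => j; apply: known.
by have /sub_kermxP -> := row_sub i (kermx Y); apply: sub0mx.
Qed.

Lemma known_coeffs_codim Q N m1 m2 (Y : 'M[F]_(Q, N)) (V : 'M[F]_(m1, N))
    (B : 'M[F]_(m2, Q)) :
  row_free Y -> (forall x : 'rV_Q, (x *m Y <= V)%MS -> (x <= B)%MS) ->
  (Q - \rank B <= N - \rank V)%N.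
Proof.
move=> /eqP freeY known.
have [D eD] : exists D, (V :&: Y)%MS = D *m Y by apply/submxP; apply: capmxSr.
have capVY : (\rank (V :&: Y) <= \rank B)%N.
  have sDB : (D <= B)%MS.
    apply/row_subP => i; apply: known; rewrite -row_mul -eD.
    exact: submx_trans (row_sub _ _) (capmxSl _ _).
  by rewrite eD; apply: leq_trans (mxrankM_maxl _ _) (mxrankS sDB).
have := mxrank_sum_cap V Y; have := rank_leq_col (V + Y)%MS; lia.
Qed.

Lemma codim_bigcapmx Q (I : eqType) (kb : I -> nat) (B : forall j, 'M[F]_(kb j, Q))
    (s : seq I) :
  (Q <= \rank (\bigcap_(j <- s) <<B j>>)%MS + \sum_(j <- s) (Q - \rank (B j)))%N.
Proof.
elim: s => [|j s IH]; first by rewrite !big_nil mxrank1 addn0.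
rewrite !big_cons; set C := (\bigcap_(i <- s) <<B i>>)%MS in IH *.
have := mxrank_sum_cap <<B j>>%MS C; rewrite genmxE.
have := rank_leq_col (<<B j>> + C)%MS; have := rank_leq_col (B j).
lia.
Qed.

(* [BD], [B2] and [Bj2] are B_Delta, B'' and B_j'' of Step 6; the rows of [X]
   are the coordinates of B_j'' on B''. *)
Section Reduction.
Variables (Q d k : nat) (BD : 'M[F]_(d, Q)) (B2 : 'M[F]_(k, Q)).
Hypothesis freeD2 : row_free (col_mx BD B2).

Lemma reduced_coeffs_sub m p (C : 'M[F]_(p, Q)) (Bj2 : 'M[F]_(m, Q)) (X : 'M[F]_(m, k))
    (x : 'rV_k) :
  (col_mx BD Bj2 == C)%MS -> Bj2 = X *m B2 -> (x *m B2 <= C)%MS -> (x <= X)%MS.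
Proof.
move=> /eqmxP <- eBX /submxP [y e]; rewrite -(hsubmxK y) mul_row_col eBX mulmxA in e.
have := row_free_col_mx_coefr (y := - lsubmx y) (x := x - rsubmx y *m X) freeD2.
rewrite mulNmx mulmxBl e addrK addNr => /(_ erefl) /eqP.
by rewrite subr_eq0 => /eqP ->; apply: submxMl.
Qed.

Lemma reduced_common_part0 (x : 'rV_k) : (x *m B2 <= BD)%MS -> x = 0.
Proof.
case/submxP => y e; apply: (row_free_col_mx_coefr (y := - y) freeD2).
by rewrite e mulNmx addNr.
Qed.

End Reduction.

End LinearAlgebra.

Section Invariant.
Variables (F : finFieldType) (n N : nat).

Lemma vanish_from_new_packets P a : vanish_from (P + a) (new_packets F N P a).
Proof.
move=> v /submxP [D ->] k Pk; rewrite mxE big1 // => i _.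
rewrite mxE; case: eqP => [e|_]; last by rewrite mulr0.
by move: Pk; rewrite e leq_add2l leqNgt ltn_ord.
Qed.

(* The new packets are unit vectors beyond the support of Y and V. *)
Lemma new_packets_unknown P a m1 m2 (Y : 'M[F]_(m1, N)) (V : 'M[F]_(m2, N))
    (x1 : 'rV_m1) (x2 : 'rV_a) :
  (P + a <= N)%N -> vanish_from P Y -> vanish_from P V ->
  ((x1 *m Y + x2 *m new_packets F N P a)%R <= V)%MS -> x2 = 0.
Proof.
move=> hPa zY zV hx; apply/rowP => i; rewrite mxE.
have lt : (P + i < N)%N by apply: leq_trans hPa; rewrite ltn_add2l ltn_ord.
have := zV _ hx (Ordinal lt) (leq_addr _ _).
rewrite mxE (zY _ (submxMl x1 _) (Ordinal lt) (leq_addr _ _)) add0r.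
rewrite mxE (bigD1 i) //= big1 ?addr0 => [|l nli]; first by rewrite !mxE eqxx mulr1.
rewrite !mxE /= eqn_add2l; case: eqP => [/val_inj li|]; last by rewrite mulr0.
by rewrite li eqxx in nli.
Qed.

Lemma rows_ofM (b : nat) m p (g : 'rV[F]_m) (Y : 'M[F]_(m, p)) :
  rows_of b (g *m Y) = rows_of b g *m Y.
Proof. by apply/matrixP => i k; rewrite !mxE; apply: eq_bigr => l _; rewrite mxE. Qed.

Definition alg_invariant P (s : state F n N) :=
  [/\ vanish_from P (Ymx s), (forall j, vanish_from P (Vmx s j)),
      (forall j (x : 'rV_(qsz s)), (x *m Ymx s <= Vmx s j)%MS -> (x <= Bmx s j)%MS),
      (forall j, (Bmx s j *m Ymx s <= Vmx s j)%MS) &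
      (forall x : 'rV_(qsz s), (forall j, (x <= Bmx s j)%MS) -> x = 0)].

Lemma alg_invariant_init : alg_invariant 0 (init_state F n N).
Proof.
split=> //= [|j|j x _|j|x _]; rewrite ?thinmx0 ?mulmx0 ?sub0mx //; exact: vanish_from0.
Qed.

Lemma alg_invariant_arrive P a s :
  (0 < n)%N -> (P + a <= N)%N -> alg_invariant P s -> alg_invariant (P + a) (arrive P a s).
Proof.
move=> hn hPa [zY zV known BYV capB0]; split=> /= [|j|j x|j|x capx].
- apply: (@vanish_fromS _ _ _ _ _ _ (Ymx s + new_packets F N P a)%MS).
    by rewrite addsmxE.
  exact: vanish_from_adds (vanish_from_widen (leq_addr a P) zY) (@vanish_from_new_packets P a).
- exact: vanish_from_widen (leq_addr _ _) (zV j).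
- rewrite -{1}(hsubmxK x) mul_row_col sub_row_mx0 => hx.
  have x20 := new_packets_unknown hPa zY (zV j) hx.
  by move: hx; rewrite x20 eqxx mul0mx addr0 andbT => /known.
- by rewrite mul_row_col mul0mx addr0 BYV.
- have {}capx j : (lsubmx x <= Bmx s j)%MS && (rsubmx x == 0).
    by rewrite -sub_row_mx0 capx.
  have /andP [_ /eqP x20] := capx (Ordinal hn).
  rewrite -(hsubmxK x) x20 (capB0 (lsubmx x)) ?row_mx0 // => j.
  by have /andP [] := capx j.
Qed.

Lemma alg_invariant_steps P s r s' :
  alg_invariant P s -> steps48 s r s' -> alg_invariant P s'.
Proof.
move=> [zY zV known BYV capB0] [g [_ /=]].
move=> [d [BD [k [B2 [m [Bj2 [X [_ [eD [freeD2 [_ [hj ->]]]]]]]]]]]].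
have XB2C j : (X j *m B2 <= col_mx (Bmx s j) (rows_of ((g != 0) && r j) g))%MS.
  have [_ [/eqmxP <- [_ <-]]] := hj j; rewrite -addsmxE; exact: addsmxSr.
split=> /= [|j|j x|j|x capx].
- exact: vanish_fromS (submxMl _ _) zY.
- by apply: vanish_from_adds (zV j) (vanish_fromS _ zY); rewrite rows_ofM submxMl.
- rewrite rows_ofM mulmxA => /(known_coeffs_adds (known j)).
  by have [_ [eC [_ eBX]]] := hj j; apply: reduced_coeffs_sub eC eBX.
- rewrite mulmxA rows_ofM; apply: submx_trans (submxMr _ (XB2C j)) _.
  by rewrite mul_col_mx -addsmxE addsmxS.
- apply: (reduced_common_part0 freeD2); rewrite (eqmxP eD).
  apply/sub_bigcapmxP => j _; rewrite genmxE.
  exact: submx_trans (submxMr _ (capx j)) (XB2C j).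
Qed.

Lemma alg_invariant_queue_bound P s :
  alg_invariant P s -> (qsz s <= \sum_(j < n) (N - \rank (Vmx s j)))%N.
Proof.
move=> [_ _ known _ capB0].
have freeY := known_coeffs_row_free known capB0.
have capB : (\bigcap_(j <- index_enum 'I_n) <<Bmx s j>>)%MS = 0.
  apply/row_matrixP => i; rewrite row0; apply: capB0 => j.
  apply: submx_trans (row_sub i _) _; rewrite -(genmxE (Bmx s j)).
  exact: (sub_bigcapmxP (submx_refl _)).
apply: leq_trans (codim_bigcapmx (Bmx s) (index_enum 'I_n)) _.
rewrite capB mxrank0 add0n; apply: leq_sum => j _.
exact: known_coeffs_codim freeY (known j).
Qed.

End Invariant.

Lemma leq_sum_ord_prefix (a : nat -> nat) u v :
  (u <= v)%N -> (\sum_(i < u) a i <= \sum_(i < v) a i)%N.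
Proof.
move=> uv; rewrite -!(big_mkord xpredT) (@big_cat_nat _ _ _ u 0 v) //=.
exact: leq_addr.
Qed.

Theorem theorem2 (F : finFieldType) (n : nat) (hn : (0 < n)%N) (hq : (n < #|F|)%N)
  (a : nat -> nat) (r : nat -> 'I_n -> bool) (t : nat)
  (sigma : nat -> state F n (\sum_(i < t.+1) a i)%N) :
  sigma 0%N = init_state F n (\sum_(i < t.+1) a i)%N ->
  (forall u, (u < t)%N ->
     steps48 (arrive (\sum_(i < u) a i)%N (a u) (sigma u)) (r u) (sigma u.+1)) ->
  (qsz (arrive (\sum_(i < t) a i)%N (a t) (sigma t))
     <= \sum_(j < n) ((\sum_(i < t.+1) a i) - \rank (Vmx (sigma t) j)))%N.
Proof.
move=> sigma0 step.
have arrivals_fit u : (u <= t)%N -> (\sum_(i < u) a i + a u <= \sum_(i < t.+1) a i)%N.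
  move=> ut; have -> : (\sum_(i < u) a i + a u = \sum_(i < u.+1) a i)%N.
    by rewrite big_ord_recr.
  exact: leq_sum_ord_prefix.
have inv u : (u <= t)%N -> alg_invariant (\sum_(i < u) a i)%N (sigma u).
  elim: u => [|u IH] ut; first by rewrite sigma0 big_ord0; apply: alg_invariant_init.
  rewrite (big_ord_recr u) /=; apply: alg_invariant_steps (step u ut).
  exact: alg_invariant_arrive hn (arrivals_fit u (ltnW ut)) (IH (ltnW ut)).
apply: alg_invariant_queue_bound.
exact: alg_invariant_arrive hn (arrivals_fit t (leqnn t)) (inv t (leqnn t)).
Qed.
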